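(* In a monotonous quiver, the property of a vertex of being phylogenetic is anti-hereditary: every ancestor of a phylogenetic vertex is phylogenetic.
   Context: A quiver consists of a class of vertices and, for each ordered pair of vertices $(A,B)$, a set of edges $A\to B$ (loops and multiple edges allowed). An evolution of length $m\ge 0$ is a sequence $A_0\leftarrow A_1\leftarrow\cdots\leftarrow A_m$ of vertices together with edges $A_k\to A_{k-1}$ ($1\le k\le m$); $A_0$ is its initial and $A_m$ its terminal vertex. Write $A\le B$ ($A$ is an ancestor of $B$) if there is an evolution with initial vertex $A$ and terminal vertex $B$; $A,B$ are isotypic ($A\sim B$) if $A\le B$ and $B\le A$. A vertex $A$ is primitive if every ancestor of $A$ is isotypic to $A$. A full evolution for $X$ is an evolution with primitive initial vertex and terminal vertex $X$. The height $h(X)$ is the smallest length of a full evolution for $X$ ($\infty$ if none). An evolution $\alpha=(A_0\leftarrow\cdots\leftarrow A_m)$ embeds in $\beta=(B_0\leftarrow\cdots\leftarrow B_n)$ if $m\le n$ and there are $0\le r_0<\cdots<r_m\le n$ with $A_k\sim B_{r_k}$. A universal evolution for $X$ is a full evolution for $X$ embedding in every full evolution for $X$; $X$ is phylogenetic if one exists. A quiver is monotonous if $h(A)\ge h(B)$ for every edge $A\to B$. *)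

From Stdlib Require Import Arith.



(* A quiver: a type of vertices V and, for each ordered pair (A,B), a type
   E A B of edges A -> B (loops and multiple edges allowed). *)

(* An evolution of length m: vertices A_0, ..., A_m (given by [ev_vert k] for
   k <= m; values beyond m are irrelevant) with edges A_k -> A_{k-1},
   i.e. for k < m an edge A_{k+1} -> A_k. *)
Record evolution (V : Type) (E : V -> V -> Type) := Evolution {
  ev_len : nat;
  ev_vert : nat -> V;
  ev_edge : forall k, k < ev_len -> E (ev_vert (S k)) (ev_vert k)
}.

Arguments ev_len {V E}.
Arguments ev_vert {V E}.

Definition initial {V E} (a : evolution V E) : V := ev_vert a 0.
Definition terminal {V E} (a : evolution V E) : V := ev_vert a (ev_len a).

Definition ancestor {V} (E : V -> V -> Type) (A B : V) : Prop :=
  exists a : evolution V E, initial a = A /\ terminal a = B.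

Definition isotypic {V} (E : V -> V -> Type) (A B : V) : Prop :=
  ancestor E A B /\ ancestor E B A.

Definition primitive {V} (E : V -> V -> Type) (A : V) : Prop :=
  forall B, ancestor E B A -> isotypic E B A.

Definition full_evolution {V} (E : V -> V -> Type) (X : V) (a : evolution V E) : Prop :=
  primitive E (initial a) /\ terminal a = X.

(* height: [is_height E X (Some n)] iff h(X) = n; [is_height E X None] iff h(X) = oo *)
Definition is_height {V} (E : V -> V -> Type) (X : V) (h : option nat) : Prop :=
  match h with
  | None => forall a : evolution V E, ~ full_evolution E X a
  | Some n =>
      (exists a : evolution V E, full_evolution E X a /\ ev_len a = n) /\
      (forall a : evolution V E, full_evolution E X a -> n <= ev_len a)
  end.

Definition le_inf (x y : option nat) : Prop :=
  match x, y with
  | _, None => True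
  | None, Some _ => False
  | Some m, Some n => m <= n
  end.

Definition embeds {V} (E : V -> V -> Type) (a b : evolution V E) : Prop :=
  ev_len a <= ev_len b /\
  exists r : nat -> nat,
    (forall k, k < ev_len a -> r k < r (S k)) /\
    r (ev_len a) <= ev_len b /\
    (forall k, k <= ev_len a -> isotypic E (ev_vert a k) (ev_vert b (r k))).

Definition universal_evolution {V} (E : V -> V -> Type) (X : V) (a : evolution V E) : Prop :=
  full_evolution E X a /\ forall b : evolution V E, full_evolution E X b -> embeds E a b.

Definition phylogenetic {V} (E : V -> V -> Type) (X : V) : Prop :=
  exists a : evolution V E, universal_evolution E X a.

Definition monotonous {V} (E : V -> V -> Type) : Prop :=
  forall (A B : V) (e : E A B) (hA hB : option nat),
    is_height E A hA -> is_height E B hB -> le_inf hB hA.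

From Stdlib Require Import Arith Lia Classical Wf_nat.

(* Let [m = h(A)] and let [d] be a full evolution of [A] of length [m].  Any
   full evolution [b] of [A], continued by an evolution from [A] to [X], is a
   full evolution of [X], so the universal evolution [al] of [X] embeds in it.
   For [k < m] the vertex [al_k] has height at most [k < h(A)], so by
   monotonicity it is not isotypic to any descendant of [A]: the first [m]
   indices of the embedding land inside [b].  Taking [b = d] forces the
   embedding to be the identity on [0, m), i.e. [al_k ~ d_k]; hence [d] embeds
   in every [b] and is universal for [A]. *)

Definition embedding {V} (E : V -> V -> Type) (a b : evolution V E) (r : nat -> nat) : Prop :=
  (forall k, k < ev_len a -> r k < r (S k)) /\
  r (ev_len a) <= ev_len b /\
  (forall k, k <= ev_len a -> isotypic E (ev_vert a k) (ev_vert b (r k))).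

Lemma strictly_increasing_shift (r : nat -> nat) n :
  (forall k, k < n -> r k < r (S k)) ->
  forall i d, i + d <= n -> r i + d <= r (i + d).
Proof.
  intros Hr i d; induction d as [|d IH]; intros Hd.
  - rewrite !Nat.add_0_r; lia.
  - specialize (IH ltac:(lia)); specialize (Hr (i + d) ltac:(lia)).
    rewrite !Nat.add_succ_r; lia.
Qed.

Lemma strictly_increasing_bounded_id (r : nat -> nat) n m :
  (forall k, k < n -> r k < r (S k)) -> m <= n ->
  (forall k, k < m -> r k < m) -> forall k, k < m -> r k = k.
Proof.
  intros Hr Hmn Hbound k Hk.
  pose proof (strictly_increasing_shift r n Hr 0 k ltac:(lia)) as Hlow.
  pose proof (strictly_increasing_shift r n Hr k (m - 1 - k) ltac:(lia)) as Hhigh.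
  replace (k + (m - 1 - k)) with (m - 1) in Hhigh by lia.
  pose proof (Hbound (m - 1) ltac:(lia)); simpl in Hlow; lia.
Qed.

Lemma le_inf_trans x y z : le_inf x y -> le_inf y z -> le_inf x z.
Proof. destruct x, y, z; simpl; tauto || lia. Qed.

Section Evolutions.
Context {V : Type} {E : V -> V -> Type}.

Definition concat_vert (a b : evolution V E) (k : nat) : V :=
  if k <? ev_len a then ev_vert a k else ev_vert b (k - ev_len a).

Definition concat (a b : evolution V E) (H : terminal a = initial b) : evolution V E.
Proof.
  refine (Evolution V E (ev_len a + ev_len b) (concat_vert a b) _).
  intros k Hk; unfold concat_vert.
  destruct (Nat.ltb_spec0 (S k) (ev_len a)); destruct (Nat.ltb_spec0 k (ev_len a)).
  - exact (ev_edge V E a k ltac:(lia)).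
  - exfalso; lia.
  - assert (Hjoin : ev_vert b (S k - ev_len a) = ev_vert a (S k)).
    { replace (S k - ev_len a) with 0 by lia; replace (S k) with (ev_len a) by lia.
      symmetry; exact H. }
    rewrite Hjoin; exact (ev_edge V E a k ltac:(lia)).
  - replace (S k - ev_len a) with (S (k - ev_len a)) by lia.
    exact (ev_edge V E b (k - ev_len a) ltac:(lia)).
Defined.

Lemma concat_len a b H : ev_len (concat a b H) = ev_len a + ev_len b.
Proof. reflexivity. Qed.

Lemma concat_vert_l a b H k : k <= ev_len a -> ev_vert (concat a b H) k = ev_vert a k.
Proof.
  intros Hk; simpl; unfold concat_vert.
  destruct (Nat.ltb_spec k (ev_len a)); [reflexivity|].
  replace k with (ev_len a) by lia; rewrite Nat.sub_diag; symmetry; exact H.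
Qed.

Lemma concat_vert_r a b H i : ev_vert (concat a b H) (ev_len a + i) = ev_vert b i.
Proof.
  simpl; unfold concat_vert.
  destruct (Nat.ltb_spec (ev_len a + i) (ev_len a)); [lia|].
  f_equal; lia.
Qed.

Definition prefix (a : evolution V E) n (H : n <= ev_len a) : evolution V E :=
  Evolution V E n (ev_vert a) (fun k Hk => ev_edge V E a k (Nat.lt_le_trans _ _ _ Hk H)).

Definition trivial_evolution (A : V) : evolution V E :=
  Evolution V E 0 (fun _ => A) (fun k Hk => False_rect _ (Nat.nlt_0_r k Hk)).

Lemma ancestor_refl A : ancestor E A A.
Proof. exists (trivial_evolution A); split; reflexivity. Qed.

Lemma ancestor_trans A B C : ancestor E A B -> ancestor E B C -> ancestor E A C.
Proof.
  intros [a [Ha0 HaB]] [b [HbB HbC]].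
  assert (H : terminal a = initial b) by congruence.
  exists (concat a b H); split.
  - unfold initial; rewrite concat_vert_l by lia; exact Ha0.
  - unfold terminal; rewrite concat_len, concat_vert_r; exact HbC.
Qed.

Lemma ancestor_initial_vert (a : evolution V E) k : k <= ev_len a -> ancestor E (initial a) (ev_vert a k).
Proof. intros Hk; exists (prefix a k Hk); split; reflexivity. Qed.

Lemma isotypic_refl A : isotypic E A A.
Proof. split; apply ancestor_refl. Qed.

Lemma isotypic_sym A B : isotypic E A B -> isotypic E B A.
Proof. intros [HAB HBA]; split; assumption. Qed.

Lemma isotypic_trans A B C : isotypic E A B -> isotypic E B C -> isotypic E A C.
Proof. intros [HAB HBA] [HBC HCB]; split; eapply ancestor_trans; eassumption. Qed.

Lemma full_evolution_prefix X (a : evolution V E) k (Hk : k <= ev_len a) :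
  full_evolution E X a -> full_evolution E (ev_vert a k) (prefix a k Hk).
Proof. intros [Hprim _]; split; [exact Hprim | reflexivity]. Qed.

Lemma full_evolution_concat Y X b g (H : terminal b = initial g) :
  full_evolution E Y b -> terminal g = X -> full_evolution E X (concat b g H).
Proof.
  intros [Hprim _] HgX; split.
  - unfold initial; rewrite concat_vert_l by lia; exact Hprim.
  - unfold terminal; rewrite concat_len, concat_vert_r; exact HgX.
Qed.

Lemma ancestor_concat_tail b g (H : terminal b = initial g) j :
  ev_len b <= j -> j <= ev_len (concat b g H) ->
  ancestor E (initial g) (ev_vert (concat b g H) j).
Proof.
  intros Hj1 Hj2; rewrite concat_len in Hj2.
  replace j with (ev_len b + (j - ev_len b)) by lia.
  rewrite concat_vert_r; apply ancestor_initial_vert; lia.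
Qed.

Lemma is_height_exists X : exists h, is_height E X h.
Proof.
  destruct (classic (exists a, full_evolution E X a)) as [[a Ha] | Hnone].
  - pose (P n := exists a, full_evolution E X a /\ ev_len a = n).
    destruct (dec_inh_nat_subset_has_unique_least_element P (fun n => classic (P n)))
      as [m [[[b Hb] Hmin] _]]; [exists (ev_len a), a; auto|].
    exists (Some m); split; [exists b; exact Hb|].
    intros c Hc; apply Hmin; exists c; auto.
  - exists None; intros a Ha; apply Hnone; exists a; exact Ha.
Qed.

Lemma is_height_le_full X h (a : evolution V E) : is_height E X h -> full_evolution E X a -> le_inf h (Some (ev_len a)).
Proof. destruct h as [n|]; simpl; [intros [_ Hmin]; apply Hmin | intros Hnone Ha; exact (Hnone a Ha)]. Qed.

Lemma is_height_le X h1 h2 : is_height E X h1 -> is_height E X h2 -> le_inf h1 h2.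
Proof.
  intros H1 H2; destruct h2 as [n|]; [|destruct h1; exact I].
  destruct H2 as [[a [Ha <-]] _]; exact (is_height_le_full X h1 a H1 Ha).
Qed.

Section Monotonous.
Hypothesis Hmono : monotonous E.

Lemma is_height_ancestor_le Y X hY hX :
  ancestor E Y X -> is_height E Y hY -> is_height E X hX -> le_inf hY hX.
Proof.
  intros [g [Hg0 HgX]] HY HX.
  assert (Halong : forall k, k <= ev_len g -> forall h, is_height E (ev_vert g k) h -> le_inf hY h).
  { induction k as [|k IH]; intros Hk h Hh.
    - apply (is_height_le Y); [exact HY | rewrite <- Hg0; exact Hh].
    - destruct (is_height_exists (ev_vert g k)) as [h' Hh'].
      apply le_inf_trans with h'; [apply IH; [lia | exact Hh'] |].
      exact (Hmono _ _ (ev_edge V E g k ltac:(lia)) h h' Hh Hh'). }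
  apply (Halong (ev_len g) (le_n _)); rewrite <- HgX in HX; exact HX.
Qed.

Lemma height_le_of_ancestor_vertex X a k A m :
  full_evolution E X a -> k <= ev_len a ->
  is_height E A (Some m) -> ancestor E A (ev_vert a k) -> m <= k.
Proof.
  intros Ha Hk HA HAk.
  destruct (is_height_exists (ev_vert a k)) as [h Hh].
  pose proof (is_height_le_full _ h _ Hh (full_evolution_prefix X a k Hk Ha)) as Hhk.
  pose proof (is_height_ancestor_le A _ _ h HAk HA Hh) as Hmh.
  exact (le_inf_trans (Some m) h (Some k) Hmh Hhk).
Qed.

Lemma embedding_index_lt X a c r A m p :
  full_evolution E X a -> embedding E a c r -> is_height E A (Some m) ->
  (forall j, p <= j -> j <= ev_len c -> ancestor E A (ev_vert c j)) ->
  forall k, k < m -> k <= ev_len a -> r k < p.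
Proof.
  intros Ha [Hr [Hlast Hiso]] HA Htail k Hkm Hk.
  destruct (Nat.lt_ge_cases (r k) p) as [Hlt | Hge]; [exact Hlt | exfalso].
  pose proof (strictly_increasing_shift r (ev_len a) Hr k (ev_len a - k) ltac:(lia)).
  replace (k + (ev_len a - k)) with (ev_len a) in * by lia.
  assert (HAk : ancestor E A (ev_vert a k)).
  { apply ancestor_trans with (ev_vert c (r k)); [apply Htail; lia | apply (Hiso k Hk)]. }
  pose proof (height_le_of_ancestor_vertex X a k A m Ha Hk HA HAk); lia.
Qed.

Lemma universal_embeds_head X A (al g : evolution V E) m :
  universal_evolution E X al -> initial g = A -> terminal g = X ->
  is_height E A (Some m) -> m <= ev_len al ->
  forall b, full_evolution E A b ->
  exists r, (forall k, k < ev_len al -> r k < r (S k)) /\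
    forall k, k < m -> r k < ev_len b /\ isotypic E (ev_vert al k) (ev_vert b (r k)).
Proof.
  intros [Hal Huniv] Hg0 HgX HA HmN b Hb.
  assert (Hbg : terminal b = initial g) by (destruct Hb; congruence).
  destruct (Huniv _ (full_evolution_concat A X b g Hbg Hb HgX)) as [_ [r Hr]].
  assert (Hhead : forall k, k < m -> r k < ev_len b).
  { intros k Hk; apply (embedding_index_lt X al _ r A m _ Hal Hr HA); [|lia|lia].
    intros j Hj1 Hj2; rewrite <- Hg0; apply ancestor_concat_tail; assumption. }
  destruct Hr as [Hincr [_ Hiso]].
  exists r; split; [exact Hincr|].
  intros k Hk; split; [exact (Hhead k Hk)|].
  rewrite <- (concat_vert_l b g Hbg) by (pose proof (Hhead k Hk); lia).
  apply Hiso; lia.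
Qed.

Lemma minimal_full_evolution_universal X A (al g d : evolution V E) m :
  universal_evolution E X al -> initial g = A -> terminal g = X ->
  is_height E A (Some m) -> full_evolution E A d -> ev_len d = m ->
  universal_evolution E A d.
Proof.
  intros Hal Hg0 HgX HA Hd Hdm.
  assert (HmN : m <= ev_len al).
  { destruct Hal as [[Hprim HalX] _].
    apply (height_le_of_ancestor_vertex X al (ev_len al) A m (conj Hprim HalX) (le_n _) HA).
    exists g; split; [exact Hg0 | rewrite HgX; symmetry; exact HalX]. }
  pose proof (universal_embeds_head X A al g m Hal Hg0 HgX HA HmN) as Hhead.
  split; [exact Hd|]; intros b Hb.
  destruct (Hhead d Hd) as [r' [Hr'incr Hr']].
  assert (Hdiag : forall k, k < m -> isotypic E (ev_vert al k) (ev_vert d k)).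
  { assert (Hid : forall k, k < m -> r' k = k).
    { apply (strictly_increasing_bounded_id r' (ev_len al)); [exact Hr'incr | exact HmN |].
      intros k Hk; rewrite <- Hdm; apply Hr'; exact Hk. }
    intros k Hk; rewrite <- (Hid k Hk) at 2; apply Hr'; exact Hk. }
  destruct (Hhead b Hb) as [r [Hrincr Hr]].
  split; [rewrite Hdm; exact (is_height_le_full A _ b HA Hb)|].
  exists (fun k => if k <? m then r k else ev_len b); rewrite Hdm; split; [|split].
  - intros k Hk.
    destruct (Nat.ltb_spec k m); [|lia].
    destruct (Nat.ltb_spec (S k) m); [apply Hrincr; lia | apply Hr; exact Hk].
  - rewrite Nat.ltb_irrefl; reflexivity.
  - intros k Hk; destruct (Nat.ltb_spec k m).
    + apply isotypic_trans with (ev_vert al k); [apply isotypic_sym, Hdiag | apply Hr]; assumption.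
    + replace k with m by lia; rewrite <- Hdm.
      destruct Hd as [_ HdA], Hb as [_ HbA].
      unfold terminal in HdA, HbA; rewrite HdA, HbA; apply isotypic_refl.
Qed.

End Monotonous.
End Evolutions.

Theorem corollary6p2 (V : Type) (E : V -> V -> Type) :
  monotonous E ->
  forall X A : V, phylogenetic E X -> ancestor E A X -> phylogenetic E A.
Proof.
  intros Hmono X A [al Hal] HAX.
  destruct (is_height_exists (E := E) X) as [hX HX].
  destruct (is_height_exists (E := E) A) as [[m|] HA].
  - destruct (proj1 HA) as [d [Hd Hdm]], HAX as [g [Hg0 HgX]].
    exists d; exact (minimal_full_evolution_universal Hmono X A al g d m Hal Hg0 HgX HA Hd Hdm).
  - exfalso.
    pose proof (is_height_le_full X hX al HX (proj1 Hal)) as HXfinite.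
    pose proof (is_height_ancestor_le Hmono A X None hX HAX HA HX) as HXinfinite.
    destruct hX; assumption.
Qed.
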